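(* Let $(A,\rhd,\lhd,\succ,\prec)$ be a finite-dimensional pre-dual pre-Poisson algebra with sub-adjacent dual pre-Poisson algebra $(A,\circ,[\cdot,\cdot])$, where $x\circ y=x\rhd y+x\lhd y$ and $[x,y]=x\succ y+x\prec y$. Let $\{e_1,\dots,e_n\}$ be a basis of $A$ and $\{e_1^*,\dots,e_n^*\}$ its dual basis. Let $\hat A=A\oplus A^*$ with operations $$(x+a^* )\circ(y+b^* )=x\circ y-L_{\rhd}^*(x)b^*+(-L_{\rhd}^*+R_{\lhd}^* )(y)a^*,$$ $$[x+a^*,y+b^*]=[x,y]+L_{\succ}^*(x)b^*-(L_{\succ}^*+R_{\prec}^* )(y)a^*,$$ for $x,y\in A$, $a^*,b^*\in A^*$ (this is a dual pre-Poisson algebra). Then $r=\sum_{i=1}^n(e_i\otimes e_i^*+e_i^*\otimes e_i)$ is a symmetric solution of the permutative-Leibniz Yang–Baxter equation in $\hat A$.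
   Context: Field $\mathbb{F}$ of characteristic $0$. For a bilinear operation $\diamond$, $L_\diamond(x)y=x\diamond y$, $R_\diamond(x)y=y\diamond x$; for $f:A\to\mathrm{End}(V)$ the dual $f^*:A\to\mathrm{End}(V^* )$ is $\langle f^*(x)v^*,u\rangle=-\langle v^*,f(x)u\rangle$. A pre-dual pre-Poisson algebra is a vector space $A$ with bilinear operations $\rhd,\lhd,\succ,\prec$ such that for all $x,y,z$: $x\lhd(y\lhd z+y\rhd z)=(x\lhd y)\lhd z=(y\rhd x)\lhd z=y\rhd(x\lhd z)$; $x\rhd(y\rhd z)=(x\lhd y+x\rhd y)\rhd z=(y\lhd x+y\rhd x)\rhd z$; $(x\prec y+x\succ y)\succ z=x\succ(y\succ z)-y\succ(x\succ z)$; $(x\succ y)\prec z=-(y\prec x)\prec z$; $x\prec(y\prec z+y\succ z)=(x\prec y)\prec z+y\succ(x\prec z)$; $x\prec(y\rhd z+y\lhd z)=(x\prec y)\lhd z+y\rhd(x\prec z)$; $x\succ(y\lhd z)=(x\succ y)\lhd z+y\lhd(x\succ z+x\prec z)$; $x\succ(y\rhd z)=(x\succ y+x\prec y)\rhd z+y\rhd(x\succ z)$; $(x\lhd y)\prec z=x\lhd(y\succ z+y\prec z)+y\rhd(x\prec z)$; $(x\rhd y+x\lhd y)\succ z=x\rhd(y\succ z)+y\rhd(x\succ z)$; $(x\rhd y-y\lhd x)\prec z=0$; $(x\succ y+y\prec x)\lhd z=0$; $(x\succ y+x\prec y+y\succ x+y\prec x)\rhd z=0$. A dual pre-Poisson algebra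 $(B,\circ,[\cdot,\cdot])$: $x\circ(y\circ z)=(x\circ y)\circ z=(y\circ x)\circ z$; $[x,[y,z]]=[[x,y],z]+[y,[x,z]]$; $[x,y\circ z]=[x,y]\circ z+y\circ[x,z]$; $[x\circ y,z]=x\circ[y,z]+y\circ[x,z]$; $[x,y]\circ z=-[y,x]\circ z$. PLYBE in a dual pre-Poisson algebra $B$: with $x\blacksquare y=x\circ y-y\circ x$, $x\square y=[x,y]+[y,x]$ and $r=\sum_i a_i\otimes b_i\in B\otimes B$, set $\mathbf{P}(r)=\sum_{i,j}\big(a_i\otimes a_j\otimes b_i\circ b_j-a_i\otimes b_i\circ a_j\otimes b_j+a_i\blacksquare a_j\otimes b_j\otimes b_i\big)$ and $\mathbf{L}(r)=\sum_{i,j}\big(a_i\otimes a_j\otimes[b_i,b_j]+a_i\otimes[b_i,a_j]\otimes b_j-a_i\square a_j\otimes b_i\otimes b_j\big)$; $r$ is a solution if $\mathbf{P}(r)=\mathbf{L}(r)=0$. Symmetric means invariant under the flip $u\otimes v\mapsto v\otimes u$. *)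

(* Coordinates: a finite-dimensional space of dimension m over F
   is 'rV[F]_m; tensors in V(x)V(x)V are given by their coordinate arrays. *)
From HB Require Import structures.
From mathcomp Require Import all_boot all_order all_algebra.
Set Implicit Arguments. Unset Strict Implicit. Unset Printing Implicit Defensive.
Import Order.TTheory GRing.Theory Num.Theory.
Local Open Scope ring_scope.

Section Defs.
Variable F : fieldType.

Definition bilinear_op (m : nat) (f : 'rV[F]_m -> 'rV[F]_m -> 'rV[F]_m) : Prop :=
  (forall (c : F) x y z, f (c *: x + y) z = c *: f x z + f y z) /\
  (forall (c : F) x y z, f z (c *: x + y) = c *: f z x + f z y).

Definition pre_dual_pre_Poisson (n : nat)
  (rhd lhd succ prec : 'rV[F]_n -> 'rV[F]_n -> 'rV[F]_n) : Prop :=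
  [/\ bilinear_op rhd, bilinear_op lhd, bilinear_op succ, bilinear_op prec &
  forall x y z,
  (lhd x (lhd y z + rhd y z) = lhd (lhd x y) z
      /\ lhd (lhd x y) z = lhd (rhd y x) z
      /\ lhd (rhd y x) z = rhd y (lhd x z)) /\
      (rhd x (rhd y z) = rhd (lhd x y + rhd x y) z
      /\ rhd (lhd x y + rhd x y) z = rhd (lhd y x + rhd y x) z) /\
      (succ (prec x y + succ x y) z = succ x (succ y z) - succ y (succ x z)) /\
      (prec (succ x y) z = - prec (prec y x) z) /\
      (prec x (prec y z + succ y z) = prec (prec x y) z + succ y (prec x z)) /\
      (prec x (rhd y z + lhd y z) = lhd (prec x y) z + rhd y (prec x z)) /\
      (succ x (lhd y z) = lhd (succ x y) z + lhd y (succ x z + prec x z)) /\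
      (succ x (rhd y z) = rhd (succ x y + prec x y) z + rhd y (succ x z)) /\
      (prec (lhd x y) z = lhd x (succ y z + prec y z) + rhd y (prec x z)) /\
      (succ (rhd x y + lhd x y) z = rhd x (succ y z) + rhd y (succ x z)) /\
      (prec (rhd x y - lhd y x) z = 0) /\
      (lhd (succ x y + prec y x) z = 0) /\
      (rhd (succ x y + prec x y + succ y x + prec y x) z = 0)].

(* natural pairing between A^* = 'rV_n and A = 'rV_n *)
Definition pairing (n : nat) (a x : 'rV[F]_n) : F := \sum_(j < n) a 0 j * x 0 j.

Definition stdv (n : nat) (j : 'I_n) : 'rV[F]_n := delta_mx 0 j.

(* dual map of L_op: <L^*(x) a, u> = - <a, x op u> *)
Definition Ldual (n : nat) (op : 'rV[F]_n -> 'rV[F]_n -> 'rV[F]_n) (x a : 'rV[F]_n)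
  : 'rV[F]_n := \row_j (- pairing a (op x (stdv j))).
(* dual map of R_op: <R^*(x) a, u> = - <a, u op x> *)
Definition Rdual (n : nat) (op : 'rV[F]_n -> 'rV[F]_n -> 'rV[F]_n) (x a : 'rV[F]_n)
  : 'rV[F]_n := \row_j (- pairing a (op (stdv j) x)).

(* hat A = A (+) A^*, an element x + a^* is row_mx x a *)
Definition inA (n : nat) (x : 'rV[F]_n) : 'rV[F]_(n + n) := row_mx x 0.
Definition inAs (n : nat) (a : 'rV[F]_n) : 'rV[F]_(n + n) := row_mx 0 a.

Definition hat_circ (n : nat) (rhd lhd : 'rV[F]_n -> 'rV[F]_n -> 'rV[F]_n)
  (u v : 'rV[F]_(n + n)) : 'rV[F]_(n + n) :=
  let x := lsubmx u in let a := rsubmx u in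
  let y := lsubmx v in let b := rsubmx v in
  row_mx (rhd x y + lhd x y)
         (- Ldual rhd x b + (- Ldual rhd y a + Rdual lhd y a)).

Definition hat_br (n : nat) (succ prec : 'rV[F]_n -> 'rV[F]_n -> 'rV[F]_n)
  (u v : 'rV[F]_(n + n)) : 'rV[F]_(n + n) :=
  let x := lsubmx u in let a := rsubmx u in
  let y := lsubmx v in let b := rsubmx v in
  row_mx (succ x y + prec x y)
         (Ldual succ x b - (Ldual succ y a + Rdual prec y a)).

Definition tens3 (m : nat) (u v w : 'rV[F]_m) (p q s : 'I_m) : F :=
  u 0 p * v 0 q * w 0 s.

(* P(r) and L(r) for r = sum_(i in I) a i (x) b i, as coordinate arrays *)
Definition PLYBE_P (m : nat) (I : finType) (circ : 'rV[F]_m -> 'rV[F]_m -> 'rV[F]_m)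
  (a b : I -> 'rV[F]_m) (p q s : 'I_m) : F :=
  \sum_(i : I) \sum_(j : I)
    (tens3 (a i) (a j) (circ (b i) (b j)) p q s
     - tens3 (a i) (circ (b i) (a j)) (b j) p q s
     + tens3 (circ (a i) (a j) - circ (a j) (a i)) (b j) (b i) p q s).

Definition PLYBE_L (m : nat) (I : finType) (br : 'rV[F]_m -> 'rV[F]_m -> 'rV[F]_m)
  (a b : I -> 'rV[F]_m) (p q s : 'I_m) : F :=
  \sum_(i : I) \sum_(j : I)
    (tens3 (a i) (a j) (br (b i) (b j)) p q s
     + tens3 (a i) (br (b i) (a j)) (b j) p q s
     - tens3 (br (a i) (a j) + br (a j) (a i)) (b i) (b j) p q s).

Definition is_PLYBE_solution (m : nat) (I : finType)
  (circ br : 'rV[F]_m -> 'rV[F]_m -> 'rV[F]_m) (a b : I -> 'rV[F]_m) : Prop :=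
  forall p q s, PLYBE_P circ a b p q s = 0 /\ PLYBE_L br a b p q s = 0.

Definition tensor_symmetric (m : nat) (I : finType) (a b : I -> 'rV[F]_m) : Prop :=
  forall p q : 'I_m, \sum_(i : I) a i 0 p * b i 0 q = \sum_(i : I) b i 0 p * a i 0 q.

(* the family defining r = sum_i (e_i (x) e_i^* + e_i^* (x) e_i) *)
Definition r_left (n : nat) (E D : 'M[F]_n) (k : 'I_n + 'I_n) : 'rV[F]_(n + n) :=
  match k with inl i => inA (row i E) | inr i => inAs (row i D) end.
Definition r_right (n : nat) (E D : 'M[F]_n) (k : 'I_n + 'I_n) : 'rV[F]_(n + n) :=
  match k with inl i => inAs (row i D) | inr i => inA (row i E) end.

End Defs.

From HB Require Import structures.
From mathcomp Require Import all_boot all_order all_algebra.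
From mathcomp Require Import ring.
Import GRing.Theory.
Local Open Scope ring_scope.
Set Implicit Arguments. Unset Strict Implicit. Unset Printing Implicit Defensive.

(* The coordinate tensor of r is the permutation matrix of the involution
   P |-> P' of the basis of A (+) A^* exchanging e_i and e_i^*.  Since P(r) and
   L(r) are built from multilinear expressions in the two legs of r, they only
   depend on that tensor, and their (P, Q, S) coordinate collapses to a
   three-term expression in products of swapped basis vectors, e.g.
   (e_P' o e_Q')_S - (e_P' o e_S')_Q + (e_S' o e_Q' - e_Q' o e_S')_P for P(r).
   By the very definition of the dual maps L^* and R^*, each such coordinate is
   a cancelling combination of structure constants of the four operations.
   Hence only their bilinearity is used: neither the pre-dual pre-Poisson
   identities, nor the characteristic, nor the invertibility of E matter. *)

Section Bilinear.
Variables (F : fieldType) (m : nat) (op : 'rV[F]_m -> 'rV[F]_m -> 'rV[F]_m).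
Hypothesis op_bilinear : bilinear_op op.

Lemma bilinear_op0l y : op 0 y = 0.
Proof. by have := op_bilinear.1 (-1) 0 0 y; rewrite !scaleN1r oppr0 addr0 addNr. Qed.

Lemma bilinear_op0r x : op x 0 = 0.
Proof. by have := op_bilinear.2 (-1) 0 0 x; rewrite !scaleN1r oppr0 addr0 addNr. Qed.

End Bilinear.

Section CoordinateSums.
Variables (F : fieldType) (m : nat).
Local Notation V := 'rV[F]_m.
Local Notation e := (@stdv F m).

Lemma stdvE (i j : 'I_m) : e i 0 j = (i == j)%:R.
Proof. by rewrite /stdv mxE eqxx eq_sym. Qed.

Lemma sum_delta_l (f : 'I_m -> F) j : \sum_i (i == j)%:R * f i = f j.
Proof. by rewrite (bigD1 j) //= eqxx mul1r big1 ?addr0 // => i /negbTE ->; rewrite mul0r. Qed.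

Lemma sum2_delta (f : 'I_m -> 'I_m -> F) P Q :
  \sum_p \sum_q (p == P)%:R * ((q == Q)%:R * f p q) = f P Q.
Proof. by under eq_bigr do rewrite -mulr_sumr sum_delta_l; rewrite sum_delta_l. Qed.

Lemma scalar_row_expand (f : V -> F) : scalar f -> forall x, f x = \sum_p x 0 p * f (e p).
Proof.
move=> lin_f x; have f0 : f 0 = 0.
  by have := lin_f (-1) 0 0; rewrite scaleN1r oppr0 addr0 mulN1r addNr.
rewrite {1}(row_sum_delta x); elim/big_rec2: _ => [|p y1 y2 _ <-]; first exact: f0.
exact: lin_f.
Qed.

Section PermutationTensor.
Variables (I : finType) (a b : I -> V) (s : 'I_m -> 'I_m).
Hypothesis tensor_ab : forall p q, \sum_i a i 0 p * b i 0 q = (q == s p)%:R.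

Lemma sum_bilinear_perm (H : V -> V -> F) :
  (forall y, scalar (H^~ y)) -> (forall x, scalar (H x)) ->
  \sum_i H (a i) (b i) = \sum_p H (e p) (e (s p)).
Proof.
move=> linl linr.
have expand x y : H x y = \sum_p \sum_q x 0 p * y 0 q * H (e p) (e q).
  rewrite [LHS](scalar_row_expand (linl y)); apply: eq_bigr => p _.
  rewrite [H _ y](scalar_row_expand (linr (e p))) mulr_sumr.
  by apply: eq_bigr => q _; rewrite mulrA.
under eq_bigr do rewrite expand.
rewrite exchange_big; apply: eq_bigr => p _; rewrite exchange_big /=.
under eq_bigr do rewrite -mulr_suml tensor_ab.
exact: sum_delta_l.
Qed.

Lemma sum2_multilinear_perm (G : V -> V -> V -> V -> F) :
  (forall y z w, scalar (fun x => G x y z w)) ->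
  (forall x z w, scalar (fun y => G x y z w)) ->
  (forall x y w, scalar (fun z => G x y z w)) ->
  (forall x y z, scalar (G x y z)) ->
  \sum_i \sum_j G (a i) (b i) (a j) (b j) = \sum_p \sum_q G (e p) (e (s p)) (e q) (e (s q)).
Proof.
move=> lin1 lin2 lin3 lin4.
under eq_bigr => i _ do rewrite (sum_bilinear_perm (H := G (a i) (b i))) //.
rewrite exchange_big [RHS]exchange_big; apply: eq_bigr => q _.
exact: (sum_bilinear_perm (H := fun x y => G x y (e q) (e (s q)))).
Qed.

Variable op : V -> V -> V.
Hypothesis op_bilinear : bilinear_op op.
Hypothesis s_inv : involutive s.

Local Ltac tens3_multilinear :=
  move=> * c u v /=; rewrite /tens3 ?(op_bilinear.1) ?(op_bilinear.2) !mxE; ring.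

Lemma sum_tens3_op_r P Q S :
  \sum_i \sum_j tens3 (a i) (a j) (op (b i) (b j)) P Q S = op (e (s P)) (e (s Q)) 0 S.
Proof.
rewrite (sum2_multilinear_perm (G := fun x y z w => tens3 x z (op y w) P Q S));
  try by tens3_multilinear.
rewrite -(sum2_delta (fun p q => op (e (s p)) (e (s q)) 0 S) P Q).
by apply: eq_bigr => p _; apply: eq_bigr => q _; rewrite /tens3 !stdvE mulrA.
Qed.

Lemma sum_tens3_op_m P Q S :
  \sum_i \sum_j tens3 (a i) (op (b i) (a j)) (b j) P Q S = op (e (s P)) (e (s S)) 0 Q.
Proof.
rewrite (sum2_multilinear_perm (G := fun x y z w => tens3 x (op y z) w P Q S));
  try by tens3_multilinear.
rewrite -(sum2_delta (fun p q => op (e (s p)) (e q) 0 Q) P (s S)).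
by apply: eq_bigr => p _; apply: eq_bigr => q _; rewrite /tens3 !stdvE (inv_eq s_inv); ring.
Qed.

Lemma sum_tens3_op_l P Q S :
  \sum_i \sum_j tens3 (op (a i) (a j)) (b i) (b j) P Q S = op (e (s Q)) (e (s S)) 0 P.
Proof.
rewrite (sum2_multilinear_perm (G := fun x y z w => tens3 (op x z) y w P Q S));
  try by tens3_multilinear.
rewrite -(sum2_delta (fun p q => op (e p) (e q) 0 P) (s Q) (s S)).
by apply: eq_bigr => p _; apply: eq_bigr => q _; rewrite /tens3 !stdvE !(inv_eq s_inv); ring.
Qed.

Lemma sum_tens3_op_l_flip P Q S :
  \sum_i \sum_j tens3 (op (a i) (a j)) (b j) (b i) P Q S = op (e (s S)) (e (s Q)) 0 P.
Proof.
rewrite (sum2_multilinear_perm (G := fun x y z w => tens3 (op x z) w y P Q S));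
  try by tens3_multilinear.
rewrite -(sum2_delta (fun p q => op (e p) (e q) 0 P) (s S) (s Q)).
by apply: eq_bigr => p _; apply: eq_bigr => q _; rewrite /tens3 !stdvE !(inv_eq s_inv); ring.
Qed.

Lemma PLYBE_P_perm P Q S :
  PLYBE_P op a b P Q S = op (e (s P)) (e (s Q)) 0 S - op (e (s P)) (e (s S)) 0 Q
                         + (op (e (s S)) (e (s Q)) - op (e (s Q)) (e (s S))) 0 P.
Proof.
have tens3B (u u' v w : V) : tens3 (u - u') v w P Q S = tens3 u v w P Q S - tens3 u' v w P Q S.
  by rewrite /tens3 !mxE; ring.
rewrite /PLYBE_P; under eq_bigr do under eq_bigr do rewrite tens3B.
under eq_bigr do rewrite big_split /= !sumrB.
rewrite big_split /= !sumrB [X in _ + (_ - X)]exchange_big /=.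
by rewrite sum_tens3_op_r sum_tens3_op_m sum_tens3_op_l_flip sum_tens3_op_l !mxE.
Qed.

Lemma PLYBE_L_perm P Q S :
  PLYBE_L op a b P Q S = op (e (s P)) (e (s Q)) 0 S + op (e (s P)) (e (s S)) 0 Q
                         - (op (e (s Q)) (e (s S)) + op (e (s S)) (e (s Q))) 0 P.
Proof.
have tens3D (u u' v w : V) : tens3 (u + u') v w P Q S = tens3 u v w P Q S + tens3 u' v w P Q S.
  by rewrite /tens3 !mxE; ring.
rewrite /PLYBE_L; under eq_bigr do under eq_bigr do rewrite tens3D.
under eq_bigr do rewrite sumrB !big_split.
rewrite sumrB !big_split /= [X in _ - (_ + X)]exchange_big /=.
by rewrite sum_tens3_op_r sum_tens3_op_m sum_tens3_op_l sum_tens3_op_l_flip !mxE.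
Qed.

End PermutationTensor.
End CoordinateSums.

Section Pairing.
Variables (F : fieldType) (n : nat).
Implicit Types (a x : 'rV[F]_n) (c : F).

Lemma pairingDl c a a' x : pairing (c *: a + a') x = c * pairing a x + pairing a' x.
Proof. by rewrite /pairing mulr_sumr -big_split; apply: eq_bigr => j _; rewrite !mxE mulrDl mulrA. Qed.

Lemma pairingDr c a x x' : pairing a (c *: x + x') = c * pairing a x + pairing a x'.
Proof. by rewrite /pairing mulr_sumr -big_split; apply: eq_bigr => j _; rewrite !mxE mulrDr mulrCA. Qed.

Lemma pairing0l x : pairing 0 x = 0.
Proof. by rewrite /pairing big1 // => j _; rewrite mxE mul0r. Qed.

Lemma pairing0r a : pairing a 0 = 0.
Proof. by rewrite /pairing big1 // => j _; rewrite mxE mulr0. Qed.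

Lemma pairing_stdv j x : pairing (stdv F j) x = x 0 j.
Proof.
rewrite /pairing (bigD1 j) //= big1 ?addr0; first by rewrite stdvE eqxx mul1r.
by move=> i /negbTE ji; rewrite stdvE eq_sym ji mul0r.
Qed.

End Pairing.

Definition swap_half n (P : 'I_(n + n)) : 'I_(n + n) :=
  match split P with inl p => rshift n p | inr p => lshift n p end.

Lemma swap_half_lshift n (p : 'I_n) : swap_half (lshift n p) = rshift n p.
Proof. by rewrite /swap_half (unsplitK (inl _ p)). Qed.

Lemma swap_half_rshift n (p : 'I_n) : swap_half (rshift n p) = lshift n p.
Proof. by rewrite /swap_half (unsplitK (inr _ p)). Qed.

Lemma swap_half_involutive n : involutive (@swap_half n).
Proof.
move=> P; case: (split_ordP P) => p ->.
  by rewrite swap_half_lshift swap_half_rshift.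
by rewrite swap_half_rshift swap_half_lshift.
Qed.

Lemma stdv_lshift (F : fieldType) n (p : 'I_n) :
  stdv F (lshift n p) = row_mx (stdv F p) 0.
Proof. exact: delta_mx_lshift. Qed.

Lemma stdv_rshift (F : fieldType) n (p : 'I_n) :
  stdv F (rshift n p) = row_mx 0 (stdv F p).
Proof. exact: delta_mx_rshift. Qed.

Section DoubleSpace.
Variables (F : fieldType) (n : nat).
Variables rhd lhd succ prec : 'rV[F]_n -> 'rV[F]_n -> 'rV[F]_n.
Hypotheses (rhd_bilinear : bilinear_op rhd) (lhd_bilinear : bilinear_op lhd).
Hypotheses (succ_bilinear : bilinear_op succ) (prec_bilinear : bilinear_op prec).

Lemma hat_circ_row_mx x a y b : hat_circ rhd lhd (row_mx x a) (row_mx y b) =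
  row_mx (rhd x y + lhd x y) (- Ldual rhd x b + (- Ldual rhd y a + Rdual lhd y a)).
Proof. by rewrite /hat_circ !row_mxKl !row_mxKr. Qed.

Lemma hat_br_row_mx x a y b : hat_br succ prec (row_mx x a) (row_mx y b) =
  row_mx (succ x y + prec x y) (Ldual succ x b - (Ldual succ y a + Rdual prec y a)).
Proof. by rewrite /hat_br !row_mxKl !row_mxKr. Qed.

Lemma hat_circ_bilinear : bilinear_op (hat_circ rhd lhd).
Proof.
have [rDl rDr] := rhd_bilinear; have [lDl lDr] := lhd_bilinear.
split=> c u v w; rewrite /hat_circ !linearD !linearZ /= scale_row_mx add_row_mx;
  congr row_mx; apply/rowP => j;
  rewrite !(mxE, rDl, rDr, lDl, lDr, pairingDl, pairingDr); ring.
Qed.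

Lemma hat_br_bilinear : bilinear_op (hat_br succ prec).
Proof.
have [sDl sDr] := succ_bilinear; have [pDl pDr] := prec_bilinear.
split=> c u v w; rewrite /hat_br !linearD !linearZ /= scale_row_mx add_row_mx;
  congr row_mx; apply/rowP => j;
  rewrite !(mxE, sDl, sDr, pDl, pDr, pairingDl, pairingDr); ring.
Qed.

Local Notation e' P := (stdv F (swap_half P)).

Lemma hat_circ_swap_identity P Q S :
  let c := hat_circ rhd lhd in
  c (e' P) (e' Q) 0 S - c (e' P) (e' S) 0 Q + (c (e' S) (e' Q) - c (e' Q) (e' S)) 0 P = 0.
Proof.
case: (split_ordP P) => p ->; case: (split_ordP Q) => q ->; case: (split_ordP S) => s ->;
  rewrite /= ?(swap_half_lshift, swap_half_rshift) ?(stdv_lshift, stdv_rshift) !hat_circ_row_mx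
    !(row_mxEl, row_mxEr, mxE, pairing_stdv, pairing0l, pairing0r, bilinear_op0l rhd_bilinear,
      bilinear_op0r rhd_bilinear, bilinear_op0l lhd_bilinear, bilinear_op0r lhd_bilinear);
  ring.
Qed.

Lemma hat_br_swap_identity P Q S :
  let c := hat_br succ prec in
  c (e' P) (e' Q) 0 S + c (e' P) (e' S) 0 Q - (c (e' Q) (e' S) + c (e' S) (e' Q)) 0 P = 0.
Proof.
case: (split_ordP P) => p ->; case: (split_ordP Q) => q ->; case: (split_ordP S) => s ->;
  rewrite /= ?(swap_half_lshift, swap_half_rshift) ?(stdv_lshift, stdv_rshift) !hat_br_row_mx
    !(row_mxEl, row_mxEr, mxE, pairing_stdv, pairing0l, pairing0r, bilinear_op0l succ_bilinear,
      bilinear_op0r succ_bilinear, bilinear_op0l prec_bilinear, bilinear_op0r prec_bilinear);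
  ring.
Qed.

End DoubleSpace.

Section DualBasis.
Variables (F : fieldType) (n : nat) (E D : 'M[F]_n).
Hypothesis dual_ED : E^T *m D = 1%:M.

Lemma r_coord_swap P Q :
  \sum_k r_left E D k 0 P * r_right E D k 0 Q = (Q == swap_half P)%:R.
Proof.
have dual_coord p q : \sum_i E i p * D i q = (p == q)%:R.
  have := congr1 (fun M : 'M_n => M p q) dual_ED; rewrite !mxE => <-.
  by apply: eq_bigr => i _; rewrite mxE.
rewrite big_sumType /=.
case: (split_ordP P) => p ->; case: (split_ordP Q) => q ->;
  under [X in X + _]eq_bigr do rewrite !(row_mxEl, row_mxEr, mxE) ?mul0r ?mulr0;
  under [X in _ + X]eq_bigr do rewrite !(row_mxEl, row_mxEr, mxE) ?mul0r ?mulr0;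
  rewrite ?(swap_half_lshift, swap_half_rshift) !eq_shift ?big1_eq ?add0r ?addr0 //.
- by rewrite dual_coord eq_sym.
- by under eq_bigr do rewrite mulrC; rewrite dual_coord.
Qed.

End DualBasis.

Theorem corollary3p31 (F : fieldType) (hchar : [pchar F] =i pred0) (n : nat)
  (rhd lhd succ prec : 'rV[F]_n -> 'rV[F]_n -> 'rV[F]_n)
  (hA : pre_dual_pre_Poisson rhd lhd succ prec)
  (E D : 'M[F]_n) (hE : E \in unitmx)
  (hD : forall i j : 'I_n, pairing (row i D) (row j E) = (i == j)%:R) :
  tensor_symmetric (r_left E D) (r_right E D) /\
  is_PLYBE_solution (hat_circ rhd lhd) (hat_br succ prec) (r_left E D) (r_right E D).
Proof.
case: hA => rhd_bil lhd_bil succ_bil prec_bil _.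
have dual_ED : E^T *m D = 1%:M.
  apply: mulmx1C; apply/matrixP => i j; rewrite !mxE -hD.
  by apply: eq_bigr => k _; rewrite !mxE.
split=> [p q | P Q S]; first by rewrite !big_sumType /= addrC.
have r_perm := r_coord_swap dual_ED.
have swap_inv := @swap_half_involutive n.
split.
- rewrite (PLYBE_P_perm r_perm (hat_circ_bilinear rhd_bil lhd_bil) swap_inv).
  exact: hat_circ_swap_identity.
- rewrite (PLYBE_L_perm r_perm (hat_br_bilinear succ_bil prec_bil) swap_inv).
  exact: hat_br_swap_identity.
Qed.
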